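(* Let $A=\langle Q,\delta,\gamma,F\rangle$ be a finitely supported and well-nested pomset automaton, and let $q\in Q$ be recursive. Then $$L_A(q)=\Bigl(\bigcup_{r\in Q:\ \gamma(q,r,q)=\top} L_A(r)\Bigr)^{\dagger}.$$
   Context: Fix a finite alphabet $\Sigma$; pomsets are isomorphism classes of $\Sigma$-labelled posets, $1$ the empty pomset, $a\in\Sigma$ the one-point pomset, $\cdot,\parallel$ sequential/parallel composition, $\mathsf{Pom}^{\mathsf{sp}}$ the smallest set containing $1$ and all $a$ closed under both. For a pomset language $\mathcal U$, $\mathcal U^\dagger=\bigcup_{n}\mathcal U^{(n)}$ with $\mathcal U^{(0)}=\{1\}$ and $\mathcal U^{(n+1)}=\{U\parallel V: U\in\mathcal U, V\in\mathcal U^{(n)}\}$. A PA is $A=\langle Q,\delta,\gamma,F\rangle$ with $F\subseteq Q$, $\delta:Q\times\Sigma\to Q$, $\gamma:Q^3\to Q$, with states $\bot\notin F$, $\top\in F$ such that $\delta(\bot,a)=\delta(\top,a)=\bot$, $\gamma(\bot,r,s)=\gamma(\top,r,s)=\bot$. Traces: the smallest relation with $q\xrightarrow{1}_A q$; $q\xrightarrow{a}_A\delta(q,a)$; $q\xrightarrow{U}_A q''\xrightarrow{V}_A q'$ implies $q\xrightarrow{U\cdot V}_A q'$; $r\xrightarrow{U}_A r'\in F$, $s\xrightarrow{V}_A s'\in F$ imply $q\xrightarrow{U\parallel V}_A\gamma(q,r,s)$. $L_A(q)=\{U:\exists q'\in F.\ q\xrightarrow{U}_A q'\}$. $\preceq_A$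 is the smallest preorder on $Q$ with $r,s\preceq_A q$ when $\gamma(q,r,s)\neq\bot$, $\delta(q,a)\preceq_A q$, and $\gamma(q,r,s)\preceq_A q$; $q\prec_A q'$ iff $q\preceq_A q'$ and $q'\not\preceq_A q$. $\pi_A(q)$ is the smallest $\preceq_A$-downward-closed set containing $q$; $A$ is finitely supported if all $\pi_A(q)$ are finite. A state $q$ is sequential if $\gamma(q,r,s)\neq\bot$ implies $r,s\prec_A q$. A state $q\in F$ is recursive if it is not sequential, $\delta(q,a)=\bot$ for all $a\in\Sigma$, and whenever $\gamma(q,r,s)\neq\bot$ we have $s=q$, $r\prec_A q$ and $\gamma(q,r,s)=\top$. $A$ is well-nested if every state is sequential or recursive. *)

From Stdlib Require Import List.
From mathcomp Require Import all_boot.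

Unset Implicit Arguments.
Unset Strict Implicit.
Unset Printing Implicit Defensive.

(* Pomsets are isomorphism classes of these; a pomset language
   is represented by a predicate on lposets, and all languages below are
   closed under isomorphism by construction. *)
Record lposet (Sigma : Type) := LPoset {
  lp_car : nat;
  lp_ord : rel 'I_lp_car;
  lp_lab : 'I_lp_car -> Sigma
}.
Arguments lp_ord {Sigma} l _ _.
Arguments lp_lab {Sigma} l _.
Arguments lp_car {Sigma} l.

Section Pomsets.
Variable Sigma : Type.

Definition lp_iso (U V : lposet Sigma) : Prop :=
  exists f : 'I_(lp_car U) -> 'I_(lp_car V),
    bijective f /\
    (forall i j, lp_ord V (f i) (f j) = lp_ord U i j) /\
    (forall i, lp_lab V (f i) = lp_lab U i).

Definition pom_one : lposet Sigma :=
  @LPoset Sigma 0 (fun _ _ => true) (fun i => match (ltn_ord i : false = true) with end).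

Definition pom_atom (a : Sigma) : lposet Sigma :=
  @LPoset Sigma 1 (fun _ _ => true) (fun _ => a).

Definition sum_lab (U V : lposet Sigma) (i : 'I_(lp_car U + lp_car V)) : Sigma :=
  match split i with inl i' => lp_lab U i' | inr j' => lp_lab V j' end.

Definition seq_ord (U V : lposet Sigma) : rel 'I_(lp_car U + lp_car V) :=
  fun i j => match split i, split j with
  | inl i', inl j' => lp_ord U i' j'
  | inr i', inr j' => lp_ord V i' j'
  | inl _, inr _ => true
  | inr _, inl _ => false
  end.

Definition pom_seq (U V : lposet Sigma) : lposet Sigma :=
  @LPoset Sigma (lp_car U + lp_car V) (seq_ord U V) (sum_lab U V).

Definition par_ord (U V : lposet Sigma) : rel 'I_(lp_car U + lp_car V) :=
  fun i j => match split i, split j with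
  | inl i', inl j' => lp_ord U i' j'
  | inr i', inr j' => lp_ord V i' j'
  | _, _ => false
  end.

Definition pom_par (U V : lposet Sigma) : lposet Sigma :=
  @LPoset Sigma (lp_car U + lp_car V) (par_ord U V) (sum_lab U V).

Fixpoint par_pow (L : lposet Sigma -> Prop) (n : nat) (U : lposet Sigma) : Prop :=
  match n with
  | 0 => lp_iso pom_one U
  | n'.+1 => exists V W, L V /\ par_pow L n' W /\ lp_iso (pom_par V W) U
  end.

Definition par_star (L : lposet Sigma -> Prop) (U : lposet Sigma) : Prop :=
  exists n, par_pow L n U.

End Pomsets.
Arguments lp_iso {Sigma} U V.
Arguments pom_atom {Sigma} a.
Arguments pom_seq {Sigma} U V.
Arguments pom_par {Sigma} U V.
Arguments par_pow {Sigma} L n U.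
Arguments par_star {Sigma} L U.

Record PA (Sigma : Type) (Q : Type) := MkPA {
  pa_fin : Q -> Prop;
  pa_delta : Q -> Sigma -> Q;
  pa_gamma : Q -> Q -> Q -> Q;
  pa_bot : Q;
  pa_top : Q;
  pa_bot_nfin : ~ pa_fin pa_bot;
  pa_top_fin : pa_fin pa_top;
  pa_delta_bot : forall a, pa_delta pa_bot a = pa_bot;
  pa_delta_top : forall a, pa_delta pa_top a = pa_bot;
  pa_gamma_bot : forall r s, pa_gamma pa_bot r s = pa_bot;
  pa_gamma_top : forall r s, pa_gamma pa_top r s = pa_bot
}.
Arguments pa_fin {Sigma Q} p _.
Arguments pa_delta {Sigma Q} p _ _.
Arguments pa_gamma {Sigma Q} p _ _ _.
Arguments pa_bot {Sigma Q} p.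
Arguments pa_top {Sigma Q} p.

Section Automata.
Variables (Sigma : Type) (Q : Type) (A : PA Sigma Q).

Local Notation F := (pa_fin A).
Local Notation delta := (pa_delta A).
Local Notation gamma := (pa_gamma A).
Local Notation bot := (pa_bot A).
Local Notation top := (pa_top A).

Inductive trace : Q -> lposet Sigma -> Q -> Prop :=
  | tr_one q : trace q (pom_one Sigma) q
  | tr_atom q a : trace q (pom_atom a) (delta q a)
  | tr_seq q q'' q' U V : trace q U q'' -> trace q'' V q' -> trace q (pom_seq U V) q'
  | tr_par q r r' s s' U V :
      trace r U r' -> F r' -> trace s V s' -> F s' ->
      trace q (pom_par U V) (gamma q r s)
  | tr_iso q q' U V : trace q U q' -> lp_iso U V -> trace q V q'.

Definition lang (q : Q) (U : lposet Sigma) : Prop :=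
  exists q', F q' /\ trace q U q'.

Inductive preceq : Q -> Q -> Prop :=
  | pre_refl q : preceq q q
  | pre_trans q1 q2 q3 : preceq q1 q2 -> preceq q2 q3 -> preceq q1 q3
  | pre_gam_l q r s : gamma q r s <> bot -> preceq r q
  | pre_gam_r q r s : gamma q r s <> bot -> preceq s q
  | pre_delta q a : preceq (delta q a) q
  | pre_gamma q r s : preceq (gamma q r s) q.

Definition prec (q q' : Q) : Prop := preceq q q' /\ ~ preceq q' q.

Inductive pi (q : Q) : Q -> Prop :=
  | pi_self : pi q q
  | pi_down q1 q2 : pi q q2 -> preceq q1 q2 -> pi q q1.

Definition finitely_supported : Prop :=
  forall q, exists s : list Q, forall x, pi q x -> In x s.

Definition sequential (q : Q) : Prop :=
  forall r s, gamma q r s <> bot -> prec r q /\ prec s q.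

Definition recursive (q : Q) : Prop :=
  F q /\ ~ sequential q /\ (forall a, delta q a = bot) /\
  (forall r s, gamma q r s <> bot -> s = q /\ prec r q /\ gamma q r s = top).

Definition well_nested : Prop := forall q, sequential q \/ recursive q.

End Automata.
Arguments trace {Sigma Q} A _ _ _.
Arguments lang {Sigma Q} A q U.
Arguments preceq {Sigma Q} A _ _.
Arguments prec {Sigma Q} A q q'.
Arguments pi {Sigma Q} A q _.
Arguments finitely_supported {Sigma Q} A.
Arguments sequential {Sigma Q} A q.
Arguments recursive {Sigma Q} A q.
Arguments well_nested {Sigma Q} A.

(** A recursive state [q] has no letter transitions, and its only fork
    transitions are [gamma q r q = top]; from [top] only the empty pomset
    avoids [bot].  So an accepting run from [q] is either empty, or a fork
    [gamma q r q] whose left thread is accepted from [r] and whose right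
    thread is again an accepting run from [q].  Induction on traces turns
    this into [L_A(q) = (U_r L_A(r))^dagger], and chaining such forks gives
    the converse inclusion. *)

From Stdlib Require Import Classical.
From mathcomp Require Import all_boot.

Set Implicit Arguments.

Section Pomsets.
Variable Sigma : Type.
Implicit Types U V W : lposet Sigma.

Lemma lp_iso_refl U : lp_iso U U.
Proof. by exists id; split; first exists id. Qed.

Lemma lp_iso_sym U V : lp_iso U V -> lp_iso V U.
Proof.
case=> f [[g fK gK] [f_ord f_lab]]; exists g; split; first by exists f.
by split=> [i j|i]; rewrite -?f_ord -?f_lab !gK.
Qed.

Lemma lp_iso_trans U V W : lp_iso U V -> lp_iso V W -> lp_iso U W.
Proof.
case=> f [[g fK gK] [f_ord f_lab]]; case=> f' [[g' fK' gK'] [f_ord' f_lab']].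
exists (f' \o f); split; first by exists (g \o g') => x /=; rewrite ?fK' ?fK ?gK ?gK'.
by split=> [i j|i] /=; rewrite ?f_ord' ?f_ord ?f_lab' ?f_lab.
Qed.

Lemma lp_iso_seq U U' V V' :
  lp_iso U U' -> lp_iso V V' -> lp_iso (pom_seq U V) (pom_seq U' V').
Proof.
case=> f [[g fK gK] [f_ord f_lab]]; case=> f' [[g' fK' gK'] [f_ord' f_lab']].
pose h i := unsplit (match split i with inl x => inl (f x) | inr y => inr (f' y) end).
pose k i := unsplit (match split i with inl x => inl (g x) | inr y => inr (g' y) end).
exists h; split.
  exists k => i; rewrite /h /k.
    by case E: (split i) => [x|y]; rewrite unsplitK ?fK ?fK' -E splitK.
  by case E: (split i) => [x|y]; rewrite unsplitK ?gK ?gK' -E splitK.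
split=> [i j|i] /=; rewrite /seq_ord /sum_lab /h.
  by case: (split i) => x; case: (split j) => y; rewrite !unsplitK.
by case: (split i) => x; rewrite unsplitK.
Qed.

Lemma lp_iso_one_seq V : lp_iso (pom_seq (pom_one Sigma) V) V.
Proof.
apply: lp_iso_sym; exists (@rshift 0 _); split.
  exists (fun i : 'I_(0 + lp_car V) => match split i with
                   | inl x => match (ltn_ord x : false = true) with end
                   | inr y => y end) => i.
    by rewrite (unsplitK (inr i : 'I_0 + _)).
  case E: (split i) => [x|y]; first by have := ltn_ord x.
  by rewrite -[i]splitK E.
by split=> [i j|i]; rewrite /= /seq_ord /sum_lab
  ?(unsplitK (inr i : 'I_0 + _)) ?(unsplitK (inr j : 'I_0 + _)).
Qed.

Lemma lp_iso_seq_one U : lp_iso (pom_seq U (pom_one Sigma)) U.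
Proof.
apply: lp_iso_sym; exists (@lshift _ 0); split.
  exists (fun i : 'I_(lp_car U + 0) => match split i with
                   | inl y => y
                   | inr x => match (ltn_ord x : false = true) with end end) => i.
    by rewrite (unsplitK (inl i : _ + 'I_0)).
  case E: (split i) => [y|x]; last by have := ltn_ord x.
  by rewrite -[i]splitK E.
by split=> [i j|i]; rewrite /= /seq_ord /sum_lab
  ?(unsplitK (inl i : _ + 'I_0)) ?(unsplitK (inl j : _ + 'I_0)).
Qed.

Lemma lp_iso_seq_onel U V :
  lp_iso (pom_one Sigma) U -> lp_iso (pom_seq U V) V.
Proof.
move=> U_one; apply: lp_iso_trans (lp_iso_one_seq V).
exact: lp_iso_seq (lp_iso_sym U_one) (lp_iso_refl V).
Qed.

Lemma lp_iso_seq_oner U V :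
  lp_iso (pom_one Sigma) V -> lp_iso (pom_seq U V) U.
Proof.
move=> V_one; apply: lp_iso_trans (lp_iso_seq_one U).
exact: lp_iso_seq (lp_iso_refl U) (lp_iso_sym V_one).
Qed.

Variable L : lposet Sigma -> Prop.

Lemma par_star_iso U V : par_star L U -> lp_iso U V -> par_star L V.
Proof.
case=> [[|n] /=] => [U_one|[X [Y [LX [XY_n XY_U]]]]] UV.
  by exists 0; apply: lp_iso_trans UV.
by exists n.+1, X, Y; do 2!split=> //; apply: lp_iso_trans UV.
Qed.

Lemma par_star_one U : lp_iso (pom_one Sigma) U -> par_star L U.
Proof. by exists 0. Qed.

Lemma par_star_par V W : L V -> par_star L W -> par_star L (pom_par V W).
Proof. by move=> LV [n W_n]; exists n.+1, V, W; do 2!split=> //; apply: lp_iso_refl. Qed.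

End Pomsets.

Section Traces.
Variables (Sigma Q : Type) (A : PA Sigma Q).

Local Notation bot := (pa_bot A).
Local Notation top := (pa_top A).

Lemma trace_bot U q' : trace A bot U q' -> q' = bot.
Proof.
move=> tr; remember bot as q0 eqn:E in tr; elim: tr E => //=.
- by move=> _ a ->; rewrite pa_delta_bot.
- by move=> q1 q'' q2 U1 V _ IHU _ IHV /IHU /IHV.
- by move=> _ r r' s s' U1 V _ _ _ _ _ _ ->; rewrite pa_gamma_bot.
Qed.

Lemma trace_top U q' :
  trace A top U q' -> q' = bot \/ q' = top /\ lp_iso (pom_one Sigma) U.
Proof.
move=> tr; remember top as q0 eqn:E in tr; elim: tr E.
- by move=> _ ->; right; split=> //; apply: lp_iso_refl.
- by move=> _ a ->; rewrite pa_delta_top; left.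
- move=> q1 q'' q2 U1 V _ IHU trV IHV /IHU [q''_bot|[q''_top U_one]].
    by rewrite q''_bot in trV; left; exact: trace_bot trV.
  have [->|[-> V_one]] := IHV q''_top; first by left.
  right; split=> //; apply: lp_iso_trans V_one (lp_iso_sym _).
  exact: lp_iso_seq_onel.
- by move=> _ r r' s s' U1 V _ _ _ _ _ _ ->; rewrite pa_gamma_top; left.
- move=> q1 q2 U1 V _ IH UV /IH [->|[-> U_one]]; first by left.
  by right; split=> //; apply: lp_iso_trans UV.
Qed.

End Traces.

Definition branch_lang (Sigma Q : Type) (A : PA Sigma Q) (q : Q) (V : lposet Sigma) :=
  exists r : Q, pa_gamma A q r q = pa_top A /\ lang A r V.

Section RecursiveState.
Variables (Sigma Q : Type) (A : PA Sigma Q) (q : Q).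
Hypothesis q_recursive : recursive A q.

Local Notation bot := (pa_bot A).
Local Notation top := (pa_top A).
Local Notation L := (branch_lang A q).

Lemma trace_recursive U q' :
  trace A q U q' ->
  [\/ q' = bot, q' = q /\ lp_iso (pom_one Sigma) U | q' = top /\ par_star L U].
Proof.
case: q_recursive => _ [_ [delta_q gamma_q]].
move=> tr; remember q as q0 eqn:E in tr; elim: tr E.
- by move=> _ ->; apply: Or32; split=> //; apply: lp_iso_refl.
- by move=> _ a ->; rewrite delta_q; apply: Or31.
- move=> q1 q'' q2 U1 V _ IHU trV IHV.
  move=> /IHU [q''_bot|[q''_q U_one]|[q''_top U_star]].
  + by rewrite q''_bot in trV; apply: Or31; exact: trace_bot trV.
  + have UV_V := lp_iso_seq_onel V U_one.
    have [->|[-> V_one]|[-> V_star]] := IHV q''_q; first exact: Or31.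
      by apply: Or32; split=> //; apply: lp_iso_trans V_one (lp_iso_sym UV_V).
    by apply: Or33; split=> //; apply: par_star_iso V_star (lp_iso_sym UV_V).
  + rewrite q''_top in trV; have [->|[-> V_one]] := trace_top trV; first exact: Or31.
    apply: Or33; split=> //.
    exact: par_star_iso U_star (lp_iso_sym (lp_iso_seq_oner U1 V_one)).
- move=> _ r r' s s' U1 V trU _ Fr' _ IHV Fs' ->.
  have [|gamma_nbot] := classic (pa_gamma A q r s = bot); first exact: Or31.
  have [s_q [_ gamma_top]] := gamma_q r s gamma_nbot; subst s.
  apply: Or33; split=> //; apply: par_star_par; first by exists r; split=> //; exists r'.
  have [s'_bot|[_ V_one]|[_ V_star]] := IHV erefl; last by [].
    by case: (pa_bot_nfin _ _ A); rewrite -s'_bot.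
  exact: par_star_one.
- move=> q1 q2 U1 V _ IH UV /IH [->|[-> U_one]|[-> U_star]]; first exact: Or31.
    by apply: Or32; split=> //; apply: lp_iso_trans UV.
  by apply: Or33; split=> //; apply: par_star_iso UV.
Qed.

Lemma lang_recursive_par_star U : lang A q U -> par_star L U.
Proof.
case=> q' [Fq' /trace_recursive [q'_bot|[_ U_one]|[_ U_star]]] //.
  by case: (pa_bot_nfin _ _ A); rewrite -q'_bot.
exact: par_star_one.
Qed.

Lemma par_pow_lang_recursive n U : par_pow L n U -> lang A q U.
Proof.
case: q_recursive => Fq _.
elim: n U => [|n IHn] U /= => [U_one|[V [W [[r [gamma_top [r' [Fr' trV]]]] [W_n VW_U]]]]].
  by exists q; split=> //; apply: tr_iso U_one; apply: tr_one.
have [q'' [Fq'' trW]] := IHn W W_n.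
exists top; split; first exact: pa_top_fin.
by apply: tr_iso VW_U; rewrite -gamma_top; apply: tr_par trV Fr' trW Fq''.
Qed.

End RecursiveState.

Theorem mainTheorem10 (Sigma : finType) (Q : Type) (A : PA Sigma Q) (q : Q) :
  finitely_supported A -> well_nested A -> recursive A q ->
  forall U : lposet Sigma,
    lang A q U <->
    par_star (fun V => exists r : Q, pa_gamma A q r q = pa_top A /\ lang A r V) U.
Proof.
move=> _ _ q_rec U; split; first exact: lang_recursive_par_star q_rec U.
by case=> n; apply: par_pow_lang_recursive q_rec n U.
Qed.
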